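(* Let $d\ge1$, let $y=(y_S)_{S\in\mathcal{V}_{n,2d}}$ be a vector over $\mathbb{F}_q$, and let $0\le e\le d-1$ with $r_e=r_{e+1}$. Let $\mathcal{I}\subseteq\mathcal{V}_{n,e}$ be such that the vectors $\{\mathbf{c}_e(B):B\in\mathcal{I}\}$ form a basis of $C_e$. Then for every $i\in[n]$ there is a linear map $T_i:C_e\to C_e$ with $T_i\mathbf{c}_e(B)=\mathbf{c}_e(B\cup\{i\})$ for every $B\in\mathcal{I}$. Moreover, for every $A\in\mathcal{V}_{n,e+1}$ and every $i\in[n]$, the vector $\mathbf{c}_e(A)$ lies in $C_e$ and $T_i\mathbf{c}_e(A)=\mathbf{c}_e(A\cup\{i\})$.
   Context: $\mathbb{F}_q$ is a finite field. $\mathcal{V}_{n,j}:=\{S\subseteq\{1,\dots,n\}:0\le|S|\le j\}$ (including $\emptyset$). For $0\le e\le d$, $H_e(y)$ is the matrix with rows and columns indexed by $\mathcal{V}_{n,e}$ and $(S,T)$ entry $y_{S\cup T}$; $r_e:=\operatorname{rank}H_e(y)$; $C_e$ is the column space of $H_e(y)$. For $A\subseteq[n]$ with $|A|\le2d-e$, the truncated column is $\mathbf{c}_e(A):=(y_{R\cup A})_{R\in\mathcal{V}_{n,e}}\in\mathbb{F}_q^{\mathcal{V}_{n,e}}$. *)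

From HB Require Import structures.
From mathcomp Require Import all_boot all_algebra.
Set Implicit Arguments. Unset Strict Implicit. Unset Printing Implicit Defensive.
Import GRing.Theory.
Local Open Scope ring_scope.

(* The index set V_{n,j} = { S subset [n] : |S| <= j } as a finite type.
   [n] = {1..n} is modelled by 'I_n. *)
Definition Vn (n j : nat) : predArgType := {S : {set 'I_n} | (#|S| <= j)%N}.
HB.instance Definition _ n j := Finite.on (Vn n j).

(* Vectors in F^{V_{n,e}} are row vectors 'rV_(#|V_{n,e}|), coordinates
   enumerated by enum_val. *)
Definition Hmx (F : fieldType) (n : nat) (y : {set 'I_n} -> F) (e : nat)
  : 'M[F]_(#|{: Vn n e}|) :=
  \matrix_(k, l) y (val (enum_val k) :|: val (enum_val l)).

Definition rk (F : fieldType) (n : nat) (y : {set 'I_n} -> F) (e : nat) : nat :=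
  \rank (Hmx y e).

Definition cvec (F : fieldType) (n : nat) (y : {set 'I_n} -> F) (e : nat)
  (A : {set 'I_n}) : 'rV[F]_(#|{: Vn n e}|) :=
  \row_k y (val (enum_val k) :|: A).

(* C_e = column space of H_e, represented (row-vector convention) as the
   row space of the transpose H_e^T: v in C_e  <->  (v <= Ce y e)%MS. *)
Definition Ce (F : fieldType) (n : nat) (y : {set 'I_n} -> F) (e : nat)
  : 'M[F]_(#|{: Vn n e}|) := (Hmx y e)^T.

Definition Ifam (F : fieldType) (n : nat) (y : {set 'I_n} -> F) (e : nat)
  (I : {set Vn n e}) : 'M[F]_(#|I|, #|{: Vn n e}|) :=
  \matrix_(k < #|I|) cvec y e (val (enum_val k)).

(** The truncation map, restricting a vector of F^{V_{n,e+1}} to the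
    coordinates in V_{n,e}, sends C_{e+1} onto a space containing C_e, so the
    rank condition r_e = r_{e+1} makes it an isomorphism of C_{e+1} onto C_e.
    In particular c_e(A) = trunc c_{e+1}(A) lies in C_e whenever |A| <= e+1.
    The shift c_{e+1}(A) |-> c_e(A u {i}) is the restriction of a linear map
    on F^{V_{n,e+1}}, and T_i is the shift composed with the inverse
    of the truncation. *)

From HB Require Import structures.
From mathcomp Require Import all_boot all_algebra.
Import GRing.Theory.
Local Open Scope ring_scope.
Set Implicit Arguments. Unset Strict Implicit.

Section InjectiveOnSubspace.

Variables (F : fieldType) (r p q : nat) (G : 'M[F]_(r, p)) (P : 'M[F]_(p, q)).
Hypothesis rankGP : \rank (G *m P) = \rank G.

Lemma mulmx_inj_sub (u v : 'rV_p) :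
  (u <= G)%MS -> (v <= G)%MS -> u *m P = v *m P -> u = v.
Proof.
move=> uG vG uPvP; have capG0 : (G :&: kermx P)%MS = 0.
  apply/eqP; rewrite -mxrank_eq0 -(eqn_add2l (\rank (G *m P))).
  by rewrite mxrank_mul_ker addn0 rankGP.
have : (u - v <= G :&: kermx P)%MS.
  by rewrite sub_capmx sub_kermx mulmxBl uPvP subrr eqxx andbT addmx_sub ?eqmx_opp.
by rewrite capG0 submx0 subr_eq0 => /eqP.
Qed.

Lemma mulmx_pinv_lift (w : 'rV_p) :
  (w <= G)%MS -> w *m P *m (pinvmx (G *m P) *m G) = w.
Proof.
move=> wG; apply: mulmx_inj_sub => //; first by rewrite mulmxA submxMl.
by rewrite -mulmxA -(mulmxA (pinvmx _)) mulmxA mulmxKpV // submxMr.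
Qed.

End InjectiveOnSubspace.

Section TruncatedColumns.

Variables (F : fieldType) (n : nat) (y : {set 'I_n} -> F).

Lemma row_Ce j k : row k (Ce y j) = cvec y j (val (enum_val k)).
Proof. by apply/rowP => l; rewrite !mxE setUC. Qed.

Lemma mxrank_Ce j : \rank (Ce y j) = rk y j.
Proof. exact: mxrank_tr. Qed.

Lemma cvec_sub_Ce j (A : {set 'I_n}) : (#|A| <= j)%N -> (cvec y j A <= Ce y j)%MS.
Proof.
move=> cardA; have := row_sub (enum_rank (Sub A cardA : Vn n j)) (Ce y j).
by rewrite row_Ce enum_rankK.
Qed.

Lemma card_setU1_leq (j : nat) (i : 'I_n) (S : {set 'I_n}) :
  (#|S| <= j)%N -> (#|S :|: [set i]| <= j.+1)%N.
Proof. by move=> cardS; rewrite setUC cardsU1 (leq_add (leq_b1 _) cardS). Qed.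

Variable e : nat.

Definition widenV (S : Vn n e) : Vn n e.+1 := Sub (val S) (leqW (valP S)).

Definition addV (i : 'I_n) (S : Vn n e) : Vn n e.+1 :=
  Sub (val S :|: [set i]) (card_setU1_leq i (valP S)).

(* [colsub g 1%:M] acts on row vectors by precomposition with [g]. *)
Definition truncmx : 'M[F]_(#|{: Vn n e.+1}|, #|{: Vn n e}|) :=
  colsub (enum_rank \o widenV \o enum_val) 1%:M.

Definition shiftmx (i : 'I_n) : 'M[F]_(#|{: Vn n e.+1}|, #|{: Vn n e}|) :=
  colsub (enum_rank \o addV i \o enum_val) 1%:M.

Lemma cvec_truncmx A : cvec y e.+1 A *m truncmx = cvec y e A.
Proof. by rewrite mulmx_colsub mulmx1; apply/rowP => l; rewrite !mxE enum_rankK. Qed.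

Lemma cvec_shiftmx i A : cvec y e.+1 A *m shiftmx i = cvec y e (A :|: [set i]).
Proof.
rewrite mulmx_colsub mulmx1; apply/rowP => l.
by rewrite !mxE enum_rankK /= setUAC setUA.
Qed.

Lemma Ce_sub_truncmx : (Ce y e <= Ce y e.+1 *m truncmx)%MS.
Proof.
apply/row_subP => k; rewrite row_Ce -cvec_truncmx submxMr // cvec_sub_Ce //.
exact: leqW (valP (enum_val k)).
Qed.

Hypothesis rk_eq : rk y e = rk y e.+1.

Lemma rank_Ce_truncmx : \rank (Ce y e.+1 *m truncmx) = \rank (Ce y e.+1).
Proof.
apply/eqP; rewrite eqn_leq mxrankM_maxl /= mxrank_Ce -rk_eq -mxrank_Ce.
exact: mxrankS Ce_sub_truncmx.
Qed.

Lemma truncmx_Ce_sub : (Ce y e.+1 *m truncmx <= Ce y e)%MS.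
Proof.
have [_ <-] := mxrank_leqif_sup Ce_sub_truncmx.
by rewrite rank_Ce_truncmx !mxrank_Ce rk_eq.
Qed.

Lemma flat_cvec_sub_Ce (A : {set 'I_n}) : (#|A| <= e.+1)%N -> (cvec y e A <= Ce y e)%MS.
Proof.
move=> cardA; rewrite -cvec_truncmx (submx_trans _ truncmx_Ce_sub) //.
by rewrite submxMr // cvec_sub_Ce.
Qed.

Definition Tmx (i : 'I_n) : 'M[F]_(#|{: Vn n e}|) :=
  pinvmx (Ce y e.+1 *m truncmx) *m Ce y e.+1 *m shiftmx i.

Lemma cvec_Tmx i (A : {set 'I_n}) :
  (#|A| <= e.+1)%N -> cvec y e A *m Tmx i = cvec y e (A :|: [set i]).
Proof.
move=> cardA; rewrite /Tmx -cvec_truncmx mulmxA.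
by rewrite mulmx_pinv_lift ?rank_Ce_truncmx ?cvec_sub_Ce ?cvec_shiftmx.
Qed.

Lemma Ce_Tmx_sub i : (Ce y e *m Tmx i <= Ce y e)%MS.
Proof.
apply/row_subP => k; have cardk := valP (enum_val k).
rewrite row_mul row_Ce cvec_Tmx ?leqW //.
exact/flat_cvec_sub_Ce/card_setU1_leq.
Qed.

End TruncatedColumns.

Theorem lemma4p4 (F : finFieldType) (n d e : nat) (y : {set 'I_n} -> F)
  (I : {set Vn n e}) :
  (1 <= d)%N -> (e <= d.-1)%N ->
  rk y e = rk y e.+1 ->
  (* {c_e(B) : B in I} is a basis of C_e *)
  row_free (Ifam y I) -> (Ifam y I == Ce y e)%MS ->
  forall i : 'I_n,
  exists T : 'M[F]_(#|{: Vn n e}|),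
    (* T is a linear map C_e -> C_e (acting by v |-> v *m T) *)
    (Ce y e *m T <= Ce y e)%MS /\
    (forall B : Vn n e, B \in I ->
       cvec y e (val B) *m T = cvec y e (val B :|: [set i])) /\
    (forall A : {set 'I_n}, (#|A| <= e.+1)%N ->
       (cvec y e A <= Ce y e)%MS /\
       cvec y e A *m T = cvec y e (A :|: [set i])).
Proof.
move=> _ _ rk_eq _ _ i; exists (Tmx y e i); split; first exact: Ce_Tmx_sub.
split; first by move=> B _; rewrite cvec_Tmx // leqW // (valP B).
by move=> A cardA; rewrite flat_cvec_sub_Ce // cvec_Tmx.
Qed.
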